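(* Let $c>0$ and consider the vector field, on the space of variables $(\rho,v,p,e,dt,dx)$ with $|v|<c$ (where $dt,dx$ are treated as independent coordinates), \[ X=-\frac{\rho v^{2}e}{c^{2}-v^{2}}\partial_{\rho}-pv\,\partial_{v}-p^{2}\partial_{p}+\frac{c^{2}p^{2}-e^{2}v^{2}}{c^{2}-v^{2}}\partial_{e}+\frac{(c^{2}p+ev^{2})\,dt-v(e+p)\,dx}{c^{2}-v^{2}}\,\partial_{dt}, \] which is the infinitesimal generator of the one-parameter group of reciprocal transformations $\rho^{*}=\dfrac{\rho\sqrt{(\epsilon p+1)^{2}-v^{2}/c^{2}}}{(\epsilon(p+Sv^{2})+1)\sqrt{1-v^{2}/c^{2}}}$, $v^{*}=\dfrac{v}{\epsilon p+1}$, $p^{*}=\dfrac{p}{\epsilon p+1}$, $e^{*}=\dfrac{S(c^{2}(\epsilon p+1)^{2}-v^{2})}{(\epsilon(p+Sv^{2})+1)(\epsilon p+1)}-\dfrac{p}{\epsilon p+1}$, $dt^{*}=dt-\epsilon(Sv\,dx-(p+Sv^{2})dt)$, $dx^{*}=dx$, where $S=(e+p)/(c^{2}-v^{2})$. Then the functions \[ J_{1}=\frac{(cp-ve)(c-v)}{(cp+ve)(c+v)},\qquad J_{2}=\frac{\rho p}{cp+ev}\sqrt{\frac{c-v}{c+v}}, \] \[ J_{3}=\frac{v(cp+ev)}{p(c-v)(pc^{2}+ev^{2})}\left((c^{2}p+ev^{2})\,dt-v(e+p)\,dx\right) \] are invariants of this group, i.e. $XJ_{1}=XJ_{2}=XJ_{3}=0$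 (on the domain where they are defined).
   Context: $c$ is the speed of light, $\rho,v,p,e$ are density, velocity, pressure and energy density of a 1+1-dimensional relativistic gas. A function $J$ is an invariant of a one-parameter group of transformations with infinitesimal generator $X$ if and only if $XJ=0$. *)

From Stdlib Require Import Reals Lra.
From Coquelicot Require Import Coquelicot.
Open Scope R_scope.

Definition fun6 := R -> R -> R -> R -> R -> R -> R.

Definition Xact (c : R) (J : fun6) (rho v p e dt dx : R) : R :=
  (- (rho * v ^ 2 * e) / (c ^ 2 - v ^ 2)) * Derive (fun r => J r v p e dt dx) rho
  + (- (p * v)) * Derive (fun w => J rho w p e dt dx) v
  + (- (p ^ 2)) * Derive (fun q => J rho v q e dt dx) p
  + ((c ^ 2 * p ^ 2 - e ^ 2 * v ^ 2) / (c ^ 2 - v ^ 2)) * Derive (fun y => J rho v p y dt dx) e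
  + (((c ^ 2 * p + e * v ^ 2) * dt - v * (e + p) * dx) / (c ^ 2 - v ^ 2))
      * Derive (fun s => J rho v p e s dx) dt.

Definition J1 (c : R) : fun6 := fun rho v p e dt dx =>
  ((c * p - v * e) * (c - v)) / ((c * p + v * e) * (c + v)).

Definition J2 (c : R) : fun6 := fun rho v p e dt dx =>
  (rho * p) / (c * p + e * v) * sqrt ((c - v) / (c + v)).

Definition J3 (c : R) : fun6 := fun rho v p e dt dx =>
  (v * (c * p + e * v)) / (p * (c - v) * (p * c ^ 2 + e * v ^ 2))
  * ((c ^ 2 * p + e * v ^ 2) * dt - v * (e + p) * dx).

From Stdlib Require Import Reals Lra.
From Coquelicot Require Import Coquelicot.
Open Scope R_scope.

(* Each invariance is a direct computation: once the partial derivatives are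
   known, X J_i is a rational function of the coordinates (for J_2, times
   sqrt((c-v)/(c+v))) that vanishes identically.  The hypothesis |v| < c keeps
   c - v, c + v and c^2 - v^2 away from zero. *)

Lemma Xact_is_derive (c : R) (J : fun6) (rho v p e dt dx Jr Jv Jp Je Jt : R) :
  is_derive (fun r : R => J r v p e dt dx) rho Jr ->
  is_derive (fun w : R => J rho w p e dt dx) v Jv ->
  is_derive (fun q : R => J rho v q e dt dx) p Jp ->
  is_derive (fun y : R => J rho v p y dt dx) e Je ->
  is_derive (fun s : R => J rho v p e s dx) dt Jt ->
  Xact c J rho v p e dt dx =
    (- (rho * v ^ 2 * e) / (c ^ 2 - v ^ 2)) * Jr + (- (p * v)) * Jv + (- (p ^ 2)) * Jp
    + ((c ^ 2 * p ^ 2 - e ^ 2 * v ^ 2) / (c ^ 2 - v ^ 2)) * Je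
    + (((c ^ 2 * p + e * v ^ 2) * dt - v * (e + p) * dx) / (c ^ 2 - v ^ 2)) * Jt.
Proof.
  intros Hr Hv Hp He Ht; unfold Xact.
  now rewrite (is_derive_unique _ _ _ Hr), (is_derive_unique _ _ _ Hv),
    (is_derive_unique _ _ _ Hp), (is_derive_unique _ _ _ He), (is_derive_unique _ _ _ Ht).
Qed.

(* Rewrites the derivative of a square root as a multiple of the root itself,
   so that [field] can treat the root as an atom. *)
Lemma Rinv_2sqrt (x : R) : 0 < x -> / (2 * sqrt x) = sqrt x / (2 * x).
Proof.
  intros Hx.
  assert (Hs := sqrt_lt_R0 _ Hx).
  rewrite <- (sqrt_sqrt x) at 3 by lra.
  field; lra.
Qed.

Section Invariants.

Variables c rho v p e dt dx : R.
Hypotheses (Hcv_minus : 0 < c - v) (Hcv_plus : 0 < c + v).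

Let Hc2_v2 : c ^ 2 - v ^ 2 <> 0.
Proof. nra. Qed.

Lemma Xact_J1 : c * p + v * e <> 0 -> Xact c (J1 c) rho v p e dt dx = 0.
Proof.
  intros Hcpve.
  assert (Hden : (c * p + v * e) * (c + v) <> 0)
    by (apply Rmult_integral_contrapositive_currified; lra).
  erewrite Xact_is_derive; unfold J1;
    try (auto_derive; [ | reflexivity]); try (exact I || exact Hden).
  field; repeat split; lra.
Qed.

Lemma Xact_J2 : c * p + e * v <> 0 -> Xact c (J2 c) rho v p e dt dx = 0.
Proof.
  intros Hcpev.
  assert (Hq : 0 < (c - v) / (c + v)) by (apply Rdiv_lt_0_compat; lra).
  erewrite Xact_is_derive; unfold J2;
    try (auto_derive; [ | reflexivity]); try (exact I || exact Hcpev).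
  - change ((c + - v) * / (c + v)) with ((c - v) / (c + v)).
    rewrite Rinv_2sqrt by exact Hq.
    field; repeat split; lra.
  - repeat split; [exact Hcpev | lra | exact Hq].
Qed.

Lemma Xact_J3 :
  p <> 0 -> p * c ^ 2 + e * v ^ 2 <> 0 -> Xact c (J3 c) rho v p e dt dx = 0.
Proof.
  intros Hp Hpcev.
  assert (Hden : p * (c - v) * (p * c ^ 2 + e * v ^ 2) <> 0)
    by (repeat apply Rmult_integral_contrapositive_currified; lra).
  erewrite Xact_is_derive; unfold J3;
    try (auto_derive; [ | reflexivity]); try (exact I || exact Hden).
  field; repeat split; lra.
Qed.

End Invariants.

Theorem mainTheorem2 (c : R) (hc : 0 < c) :
  forall rho v p e dt dx : R, Rabs v < c ->
    (c * p + v * e <> 0 -> Xact c (J1 c) rho v p e dt dx = 0) /\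
    (c * p + e * v <> 0 -> Xact c (J2 c) rho v p e dt dx = 0) /\
    (p <> 0 -> p * c ^ 2 + e * v ^ 2 <> 0 -> Xact c (J3 c) rho v p e dt dx = 0).
Proof.
  intros rho v p e dt dx Hv.
  apply Rabs_def2 in Hv as [Hv_lt Hv_gt].
  assert (Hcv_minus : 0 < c - v) by lra.
  assert (Hcv_plus : 0 < c + v) by lra.
  repeat split.
  - now apply Xact_J1.
  - now apply Xact_J2.
  - now apply Xact_J3.
Qed.
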